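(* Let $\boldsymbol{H}$ be a self-adjoint operator on $L^{2}(\mathbb{Z}_{p})$ defined on the dense subspace $\mathcal{D}(\mathbb{Z}_{p})$, with associated unitary group $e^{-i\boldsymbol{H}t}$, $t\in\mathbb{R}$. Let $\mathcal{N}\subset\mathbb{Z}_{p}$ have Haar measure zero and let $\{\mathcal{K}_{j}\}_{j\in\mathbb{J}}$ ($\mathbb{J}$ countable) be pairwise disjoint open compact subsets of $\mathbb{Z}_p$ with $\mathbb{Z}_{p}\smallsetminus\mathcal{N}=\bigsqcup_{j\in\mathbb{J}}\mathcal{K}_{j}$. Put $e_{v}=c_{v}1_{\mathcal{K}_{v}}$ with $c_v>0$ chosen so that $\|e_v\|_2=1$, and $\pi_{r,v}(t)=|\langle e_{r},e^{-i\boldsymbol{H}t}e_{v}\rangle|^{2}$ for $r,v\in\mathbb{J}$, $t\geq 0$. Assume (H1) $\mathcal{H}_{\mathbb{J}}:=\mathrm{Span}\{e_j;\ j\in\mathbb{J}\}$ is a Hilbert subspace of $L^{2}(\mathbb{Z}_{p})$, and (H2) $e^{-i\boldsymbol{H}t}\mathcal{H}_{\mathbb{J}}\subset\mathcal{H}_{\mathbb{J}}$ for $t\ge 0$. Then $\sum_{r\in\mathbb{J}}\pi_{r,v}(t)=1$ for all $t\geq0$ and every $v\in\mathbb{J}$.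
   Context: $p$ is a fixed prime, $\mathbb{Z}_p$ the $p$-adic integers with Haar measure $dx$ normalized by $\int_{\mathbb{Z}_p}dx=1$, $1_A$ the characteristic function of $A$, and $\langle f,g\rangle=\int_{\mathbb{Z}_p}f\overline{g}\,dx$. $\mathcal{D}(\mathbb{Z}_p)$ is the space of locally constant complex functions supported in $\mathbb{Z}_p$. *)

From HB Require Import structures.
From mathcomp Require Import all_boot all_order all_algebra.
From mathcomp Require Import all_classical all_reals all_analysis.
From mathcomp Require Import complex.
Set Implicit Arguments. Unset Strict Implicit. Unset Printing Implicit Defensive.
Import Order.TTheory GRing.Theory Num.Theory.
Local Open Scope classical_set_scope.
Local Open Scope ring_scope.
Local Open Scope complex_scope.

(* The p-adic integers Z_p, as a measure/topological space, are modelled by  *)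
(* their p-adic digit expansions x = sum_k x_k p^k, x_k in {0,..,p-1}.       *)
(* (For p prime, p.-1.+1 = p, so 'I_p.-1.+1 is the digit set 'I_p.)          *)
Definition Zpadic (p : nat) : Type := nat -> 'I_p.-1.+1.
HB.instance Definition _ (p : nat) := Choice.on (Zpadic p).
HB.instance Definition _ (p : nat) := isPointed.Build (Zpadic p) (fun _ => ord0).

(* the ball a + p^n Z_p : points whose first n digits agree with those of a *)
Definition Zp_ball (p : nat) (a : Zpadic p) (n : nat) : set (Zpadic p) :=
  [set y | forall k, (k < n)%N -> y k = a k].

Definition Zp_balls (p : nat) : set (set (Zpadic p)) :=
  [set B | exists a n, B = Zp_ball a n].

(* Z_p with its Borel sigma-algebra (generated by the balls, which form a   *)
(* countable basis of the p-adic topology)                                  *)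
Definition ZpM (p : nat) := g_sigma_algebraType (@Zp_balls p).

Definition Zp_open (p : nat) (U : set (Zpadic p)) : Prop :=
  forall x, U x -> exists n, Zp_ball x n `<=` U.

Definition Zp_compact (p : nat) (K : set (Zpadic p)) : Prop :=
  forall (I : Type) (V : I -> set (Zpadic p)), (forall i, Zp_open (V i)) ->
    K `<=` \bigcup_i V i ->
    exists F : set I, finite_set F /\ K `<=` \bigcup_(i in F) V i.

(* Haar measure dx on Z_p, normalized by int_{Z_p} dx = 1: the measure of     *)
(* a + p^n Z_p is p^-n (this determines the measure on the Borel sets).      *)
Definition is_haar (R : realType) (p : nat)
    (mu : {measure set (ZpM p) -> \bar R}) : Prop :=
  forall (a : Zpadic p) (n : nat), mu (Zp_ball a n) = (((p%:R : R)^-1) ^+ n)%:E.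

(* L^2(Z_p) : complex valued square-integrable functions (elements are      *)
(* representatives; equality in L^2 is equality up to null sets, i.e.       *)
(* L2norm (f - g) = 0).                                                     *)
Section L2.
Context (R : realType) (p : nat) (mu : {measure set (ZpM p) -> \bar R}).

Definition sqmod (z : R[i]) : R := complex.Re z ^+ 2 + complex.Im z ^+ 2.

Definition L2 (f : ZpM p -> R[i]) : Prop :=
  measurable_fun setT (fun x => complex.Re (f x)) /\
  measurable_fun setT (fun x => complex.Im (f x)) /\
  (\int[mu]_x (sqmod (f x))%:E < +oo)%E.

Definition L2inner (f g : ZpM p -> R[i]) : R[i] :=
  (Rintegral mu setT (fun x => complex.Re (f x * (g x)^*))) +i*
  (Rintegral mu setT (fun x => complex.Im (f x * (g x)^*))).

Definition L2norm (f : ZpM p -> R[i]) : R :=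
  Num.sqrt (Rintegral mu setT (fun x => sqmod (f x))).

Definition fsub (f g : ZpM p -> R[i]) : ZpM p -> R[i] := fun x => f x - g x.
Definition fadd (f g : ZpM p -> R[i]) : ZpM p -> R[i] := fun x => f x + g x.
Definition fscale (a : R[i]) (f : ZpM p -> R[i]) : ZpM p -> R[i] :=
  fun x => a * f x.

Definition L2eq (f g : ZpM p -> R[i]) : Prop := L2norm (fsub f g) = 0.

(* D(Z_p): locally constant complex functions supported in Z_p *)
Definition locally_constant (f : ZpM p -> R[i]) : Prop :=
  forall x : Zpadic p, exists n, forall y, Zp_ball x n y -> f y = f x.

Definition operator := (ZpM p -> R[i]) -> (ZpM p -> R[i]).

Definition unitary_group (U : R -> operator) : Prop :=
  (forall t f, L2 f -> L2 (U t f)) /\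
  (forall t f g, L2 f -> L2 g -> L2inner (U t f) (U t g) = L2inner f g) /\
  (forall t g, L2 g -> exists2 f, L2 f & L2eq (U t f) g) /\
  (forall t a f g, L2 f -> L2 g ->
      L2eq (U t (fadd (fscale a f) g)) (fadd (fscale a (U t f)) (U t g))) /\
  (forall f, L2 f -> L2eq (U 0 f) f) /\
  (forall s t f, L2 f -> L2eq (U (s + t) f) (U s (U t f))) /\
  (forall f, L2 f -> (fun t => L2norm (fsub (U t f) f)) @ 0^' --> 0).

(* U t = e^{-iHt}, where H is a self-adjoint operator defined on the dense  *)
(* subspace D(Z_p) : by Stone's theorem this means that the self-adjoint    *)
(* generator A of U (i.e. U t = e^{-iAt}, A f = i d/dt U t f |_{t=0})       *)
(* extends H|_D(Z_p) and is its closure (D(Z_p) is a core for A).          *)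
Definition generator_graph (U : R -> operator) (f g : ZpM p -> R[i]) : Prop :=
  L2 f /\ L2 g /\
  (fun t : R => L2norm (fsub (fscale (t^-1)%:C (fsub (U t f) f))
                             (fscale (- 'i) g))) @ 0^' --> 0.

Definition unitary_group_of (H : operator) (U : R -> operator) : Prop :=
  [/\ unitary_group U,
      (forall f, locally_constant f -> generator_graph U f (H f)) &
      (forall f g, generator_graph U f g ->
         exists fn : nat -> (ZpM p -> R[i]),
           [/\ forall n, locally_constant (fn n),
               (fun n => L2norm (fsub (fn n) f)) @ \oo --> 0 &
               (fun n => L2norm (fsub (H (fn n)) g)) @ \oo --> 0])].

Definition closed_span (J : eqType) (e : J -> ZpM p -> R[i])
    (f : ZpM p -> R[i]) : Prop :=
  L2 f /\ forall eps : R, 0 < eps ->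
    exists (s : seq J) (a : J -> R[i]),
      L2norm (fsub f (fun x => \sum_(j <- s) a j * e j x)) < eps.

End L2.

Definition e_fun (R : realType) (p : nat) (J : Type) (c : J -> R)
    (K : J -> set (Zpadic p)) (v : J) : ZpM p -> R[i] :=
  fun x => (c v * \1_(K v) x)%:C.

(* The e_j have disjoint supports and unit norm, hence are orthonormal, and for
   F in L^2 and distinct indices j_1, ..., j_n, writing c_j = <F, e_j>,
     ||F - sum_k a_k e_(j_k)||^2 = ||F||^2 - sum_k |c_(j_k)|^2 + sum_k |c_(j_k) - a_k|^2.
   Taking a = c gives Bessel's inequality; if F lies in the closed span of the
   e_j, the left side can be made arbitrarily small, which gives Parseval's
   identity sum_j |c_j|^2 = ||F||^2.  For F = e^{-iHt} e_v this sum is the sum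
   of the pi_(r,v)(t) (since |<e_r, F>| = |<F, e_r>|), F is in the closed span
   by (H2), and ||F|| = ||e_v|| = 1 by unitarity. *)

From HB Require Import structures.
From mathcomp Require Import all_boot all_order all_algebra.
From mathcomp Require Import all_classical all_reals all_analysis.
From mathcomp Require Import complex measurable_realfun.
From mathcomp Require Import ring lra.
Set Implicit Arguments. Unset Strict Implicit. Unset Printing Implicit Defensive.
Import Order.TTheory GRing.Theory Num.Theory.
Local Open Scope classical_set_scope.
Local Open Scope ring_scope.
Local Open Scope complex_scope.

Section SquaredModulus.
Variable R : realType.
Implicit Types z w : R[i].

Lemma sqmod_ge0 z : 0 <= sqmod z.
Proof. by rewrite addr_ge0 ?sqr_ge0. Qed.

Lemma sqmod0 : sqmod (0 : R[i]) = 0.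
Proof. by rewrite /sqmod /= expr0n addr0. Qed.

Lemma sqmodM z w : sqmod (z * w) = sqmod z * sqmod w.
Proof. by case: z => a b; case: w => c d; rewrite /sqmod /=; ring. Qed.

Lemma Re_mulcJ z w :
  complex.Re (z * w^*) = complex.Re z * complex.Re w + complex.Im z * complex.Im w.
Proof. by case: z => a b; case: w => c d /=; ring. Qed.

Lemma Im_mulcJ z w :
  complex.Im (z * w^*) = complex.Im z * complex.Re w - complex.Re z * complex.Im w.
Proof. by case: z => a b; case: w => c d /=; ring. Qed.

Lemma Re_mulcJ_id z : complex.Re (z * z^*) = sqmod z.
Proof. by rewrite Re_mulcJ /sqmod !expr2. Qed.

Lemma sqmodB z w : sqmod (z - w) = sqmod z - 2 * complex.Re (z * w^*) + sqmod w.
Proof. by case: z => a b; case: w => c d; rewrite /sqmod /=; ring. Qed.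

Lemma normr_Re_mulcJ_le z w : `|complex.Re (z * w^*)| <= sqmod z + sqmod w.
Proof.
rewrite Re_mulcJ /sqmod ler_norml.
case: z w => [a b] [c d] /=.
have := sqr_ge0 (a - c); have := sqr_ge0 (a + c).
have := sqr_ge0 (b - d); have := sqr_ge0 (b + d).
by move=> *; apply/andP; split; nra.
Qed.

Lemma normr_Im_mulcJ_le z w : `|complex.Im (z * w^*)| <= sqmod z + sqmod w.
Proof.
rewrite Im_mulcJ /sqmod ler_norml.
case: z w => [a b] [c d] /=.
have := sqr_ge0 (b - c); have := sqr_ge0 (b + c).
have := sqr_ge0 (a - d); have := sqr_ge0 (a + d).
by move=> *; apply/andP; split; nra.
Qed.

End SquaredModulus.

Section RealIntegrable.
Context d (T : measurableType d) (R : realType) (mu : {measure set T -> \bar R}).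
Local Notation integrable f := (mu.-integrable setT (EFin \o f)).

Lemma integrableZl_EFin k (f : T -> R) : integrable f -> integrable (fun x => k * f x).
Proof.
by move=> /(integrableZl measurableT k); apply: eq_integrable.
Qed.

Lemma integrableZr_EFin k (f : T -> R) : integrable f -> integrable (fun x => f x * k).
Proof.
move=> /(integrableZl_EFin k); apply: eq_integrable => // x _ /=.
by rewrite mulrC.
Qed.

Lemma integrableD_EFin (f g : T -> R) :
  integrable f -> integrable g -> integrable (fun x => f x + g x).
Proof.
by move=> if_ ig; apply: eq_integrable (integrableD measurableT if_ ig).
Qed.

Lemma integrableB_EFin (f g : T -> R) :
  integrable f -> integrable g -> integrable (fun x => f x - g x).
Proof.
by move=> if_ ig; apply: eq_integrable (integrableB measurableT if_ ig).
Qed.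

Lemma integrable_sum_EFin (I : Type) (s : seq I) (h : I -> T -> R) :
  (forall i, integrable (h i)) -> integrable (fun x => \sum_(i <- s) h i x).
Proof.
move=> ih; have := @integrable_sum _ _ _ mu setT measurableT I s xpredT
  (fun i x => (h i x)%:E) (fun i _ => ih i).
by apply: eq_integrable => // x _ /=; rewrite sumEFin.
Qed.

Lemma Rintegral_sum (I : Type) (s : seq I) (h : I -> T -> R) :
  (forall i, integrable (h i)) ->
  Rintegral mu setT (fun x => \sum_(i <- s) h i x) =
  \sum_(i <- s) Rintegral mu setT (h i).
Proof.
move=> ih; elim: s => [|i s IHs].
  by under eq_Rintegral do rewrite big_nil; rewrite big_nil /Rintegral integral0.
under eq_Rintegral do rewrite big_cons.
by rewrite big_cons RintegralD ?IHs //; exact: integrable_sum_EFin.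
Qed.

End RealIntegrable.

Lemma esum_eq_lub_sums (R : realType) (I : choiceType) (f : I -> R) (l : R) :
  (forall s, uniq s -> \sum_(i <- s) f i <= l) ->
  (forall eps, 0 < eps -> exists2 s, uniq s & l - eps <= \sum_(i <- s) f i) ->
  (\esum_(i in [set: I]) (f i)%:E = l%:E)%E.
Proof.
move=> sum_le sum_approx; apply/eqP; rewrite eq_le; apply/andP; split.
  apply: ge_ereal_sup => _ [X [finX _] <-].
  by rewrite fsbig_finite //= sumEFin lee_fin sum_le ?finmap.fset_uniq.
apply/lee_subgt0Pr => eps eps_gt0; have [s us le_s] := sum_approx eps eps_gt0.
apply: esum_ge; exists [set` s]; first by split => //; exact: finite_seq.
by rewrite -fsbig_seq // sumEFin -EFinB lee_fin.
Qed.

Lemma sumr_undup_count (V : nmodType) (I : eqType) (s : seq I) (f : I -> V) :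
  \sum_(i <- s) f i = \sum_(i <- undup s) f i *+ count_mem i s.
Proof.
rewrite -big_undup_iterop_count; apply: eq_bigr => i _.
by rewrite Monoid.iteropE; elim: (count_mem i s) => //= n ->; rewrite mulrS.
Qed.

Section L2Calculus.
Variables (R : realType) (p : nat) (mu : {measure set (ZpM p) -> \bar R}).
Local Notation T := (ZpM p).
Local Notation integrable f := (mu.-integrable setT (EFin \o f)).
Local Notation Rint := (Rintegral mu setT).
Implicit Types f g : T -> R[i].

Lemma sqr_L2norm f : L2norm mu f ^+ 2 = Rint (fun x => sqmod (f x)).
Proof. by rewrite sqr_sqrtr // Rintegral_ge0 // => x _; exact: sqmod_ge0. Qed.

Lemma Re_L2inner_id f : complex.Re (L2inner mu f f) = Rint (fun x => sqmod (f x)).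
Proof. by apply: eq_Rintegral => x _; rewrite Re_mulcJ_id. Qed.

Lemma L2_sqmod_integrable f : L2 mu f -> integrable (fun x => sqmod (f x)).
Proof.
case=> mRe [mIm fin]; apply/integrableP; split.
  by apply/measurable_EFinP; apply: measurable_funD; exact: measurable_funX.
rewrite (eq_integral (fun x => (sqmod (f x))%:E)%E) // => x _.
by rewrite /= ger0_norm ?sqmod_ge0.

Qed.

Lemma L2_integrable_le f g (h : T -> R) : L2 mu f -> L2 mu g ->
  measurable_fun setT h -> (forall x, `|h x| <= sqmod (f x) + sqmod (g x)) ->
  integrable h.
Proof.
move=> f2 g2 mh h_le.
have := integrableD_EFin (L2_sqmod_integrable f2) (L2_sqmod_integrable g2).
apply: le_integrable => //; first exact/measurable_EFinP.
move=> x _; rewrite /= lee_fin (le_trans (h_le x)) //.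
by rewrite ger0_norm // addr_ge0 ?sqmod_ge0.
Qed.

Lemma L2_Re_mulcJ_integrable f g : L2 mu f -> L2 mu g ->
  integrable (fun x => complex.Re (f x * (g x)^*)).
Proof.
move=> f2 g2; apply: (L2_integrable_le f2 g2); last by move=> x; exact: normr_Re_mulcJ_le.
case: f2 g2 => [mRf [mIf _]] [mRg [mIg _]]; under eq_fun do rewrite Re_mulcJ.
by apply: measurable_funD; exact: measurable_funM.
Qed.

Lemma L2_Im_mulcJ_integrable f g : L2 mu f -> L2 mu g ->
  integrable (fun x => complex.Im (f x * (g x)^*)).
Proof.
move=> f2 g2; apply: (L2_integrable_le f2 g2); last by move=> x; exact: normr_Im_mulcJ_le.
case: f2 g2 => [mRf [mIf _]] [mRg [mIg _]]; under eq_fun do rewrite Im_mulcJ.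
by apply: measurable_funB; exact: measurable_funM.
Qed.

Lemma integrable_Re_mulcJ_scale f g b : L2 mu f -> L2 mu g ->
  integrable (fun x => complex.Re (f x * (g x)^* * b^*)).
Proof.
move=> f2 g2; under eq_fun do rewrite Re_mulcJ.
by apply: integrableD_EFin; apply: integrableZr_EFin;
  [exact: L2_Re_mulcJ_integrable | exact: L2_Im_mulcJ_integrable].
Qed.

Lemma Rintegral_Re_mulcJ_scale f g b : L2 mu f -> L2 mu g ->
  Rint (fun x => complex.Re (f x * (g x)^* * b^*)) = complex.Re (L2inner mu f g * b^*).
Proof.
move=> f2 g2; under eq_Rintegral do rewrite Re_mulcJ.
have iRe := L2_Re_mulcJ_integrable f2 g2; have iIm := L2_Im_mulcJ_integrable f2 g2.
rewrite RintegralD ?RintegralZr ?Re_mulcJ //; exact: integrableZr_EFin.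
Qed.

Lemma sqmod_L2innerC f g : L2 mu f -> L2 mu g ->
  sqmod (L2inner mu g f) = sqmod (L2inner mu f g).
Proof.
move=> f2 g2; rewrite /sqmod /L2inner /=; congr (_ ^+ 2 + _).
  by apply: eq_Rintegral => x _; rewrite !Re_mulcJ; ring.
rewrite -[RHS]sqrrN -mulN1r -RintegralZl //; last exact: L2_Im_mulcJ_integrable.
by congr (_ ^+ 2); apply: eq_Rintegral => x _; rewrite !Im_mulcJ; ring.
Qed.

Lemma mem_closed_span (J : eqType) (e : J -> T -> R[i]) v :
  L2 mu (e v) -> closed_span mu e (e v).
Proof.
move=> ev2; split => // eps eps_gt0; exists [:: v], (fun _ => 1).
rewrite /L2norm; under eq_Rintegral do
  rewrite /fsub big_seq1 mul1r subrr sqmod0.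
by rewrite /Rintegral integral0 /= sqrtr0.
Qed.

End L2Calculus.

Section DisjointOrthonormalFamily.
Variables (R : realType) (p : nat) (mu : {measure set (ZpM p) -> \bar R}).
Local Notation T := (ZpM p).
Local Notation Rint := (Rintegral mu setT).
Variables (J : choiceType) (e : J -> T -> R[i]).
Hypothesis e_L2 : forall j, L2 mu (e j).
Hypothesis e_unit : forall j, Rint (fun x => sqmod (e j x)) = 1.
Hypothesis e_disj : forall i j x, i != j -> e i x = 0 \/ e j x = 0.

Lemma sqmod_sum_disjoint (s : seq J) (a : J -> R[i]) x : uniq s ->
  sqmod (\sum_(j <- s) a j * e j x) = \sum_(j <- s) sqmod (a j) * sqmod (e j x).
Proof.
move=> us; have [[j js ejx]|] := pselect (exists2 j, j \in s & e j x != 0).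
  have e0 i : i != j -> e i x = 0.
    by move=> ij; case: (e_disj x ij) => // eji; rewrite eji eqxx in ejx.
  rewrite (bigD1_seq j) //= big1 ?addr0 => [|i /e0 ->]; last by rewrite mulr0.
  rewrite (bigD1_seq j) //= big1 ?addr0 ?sqmodM // => i /e0 ->.
  by rewrite sqmod0 mulr0.
move=> nejx; have e0 j : j \in s -> e j x = 0.
  by move=> js; apply/eqP; apply: contra_notT nejx => ejx; exists j.
rewrite big_seq_cond big1 => [|j /andP[/e0 -> _]]; last by rewrite mulr0.
rewrite big_seq_cond big1 ?sqmod0 // => j /andP[/e0 -> _].
by rewrite sqmod0 mulr0.
Qed.

Variables (F : T -> R[i]) (F_L2 : L2 mu F).
Local Notation coef j := (L2inner mu F (e j)).

Lemma Rintegral_sqmod_sub_lincomb (s : seq J) (a : J -> R[i]) : uniq s ->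
  Rint (fun x => sqmod (F x - \sum_(j <- s) a j * e j x)) =
  Rint (fun x => sqmod (F x)) - \sum_(j <- s) sqmod (coef j)
  + \sum_(j <- s) sqmod (coef j - a j).
Proof.
move=> us; pose h j x := sqmod (a j) * sqmod (e j x)
  - 2 * complex.Re (F x * (e j x)^* * (a j)^*).
have F_int := L2_sqmod_integrable F_L2.
have e_int j := L2_sqmod_integrable (e_L2 j).
have Fe_int j := integrable_Re_mulcJ_scale (a j) F_L2 (e_L2 j).
have h_int j : mu.-integrable setT (EFin \o h j).
  by apply: integrableB_EFin; exact: integrableZl_EFin.
have h_Rint j : Rint (h j) = sqmod (a j) - 2 * complex.Re (coef j * (a j)^*).
  rewrite RintegralB ?RintegralZl ?e_unit ?mulr1 ?Rintegral_Re_mulcJ_scale //;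
  exact: integrableZl_EFin.
have expand x : sqmod (F x - \sum_(j <- s) a j * e j x) =
    sqmod (F x) + \sum_(j <- s) h j x.
  rewrite sqmodB sqmod_sum_disjoint // rmorph_sum mulr_sumr raddf_sum mulr_sumr.
  rewrite -addrA -sumrN -big_split; congr (_ + _); apply: eq_bigr => j _.
  by rewrite /h rmorphM [(a j)^* * _]mulrC mulrA addrC.
under eq_Rintegral do rewrite expand.
rewrite RintegralD ?Rintegral_sum //; last exact: integrable_sum_EFin.
rewrite -addrA; congr (_ + _); rewrite -sumrN -big_split /=.
by apply: eq_bigr => i _; rewrite h_Rint sqmodB; ring.
Qed.

Lemma bessel_inequality (s : seq J) : uniq s ->
  \sum_(j <- s) sqmod (coef j) <= Rint (fun x => sqmod (F x)).
Proof.
move=> us; have := @Rintegral_ge0 _ _ _ mu setT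
  (fun x => sqmod (F x - \sum_(j <- s) coef j * e j x)) (fun x _ => sqmod_ge0 _).
rewrite Rintegral_sqmod_sub_lincomb // [X in _ + X]big1 => [|j _].
  by rewrite addr0 subr_ge0.
by rewrite subrr sqmod0.
Qed.

Lemma parseval_closed_span : closed_span mu e F ->
  (\esum_(j in [set: J]) (sqmod (coef j))%:E =
   (Rint (fun x => sqmod (F x)))%:E)%E.
Proof.
case=> _ approx; apply: esum_eq_lub_sums; first exact: bessel_inequality.
move=> eps eps_gt0; have sqrt_eps_gt0 : 0 < Num.sqrt eps by rewrite sqrtr_gt0.
have [s [a]] := approx _ sqrt_eps_gt0.
rewrite /L2norm ltr_sqrt // /fsub.
(* [closed_span] allows repeated indices, the expansion needs distinct ones. *)
under eq_Rintegral do rewrite sumr_undup_count.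
under eq_Rintegral do under eq_bigr do rewrite -mulrnAl.
move=> lt_eps; exists (undup s); first exact: undup_uniq.
move: lt_eps; rewrite Rintegral_sqmod_sub_lincomb ?undup_uniq //.
have := @sumr_ge0 _ _ (undup s) xpredT _
  (fun j _ => sqmod_ge0 (coef j - a j *+ count_mem j s)).
lra.
Qed.

End DisjointOrthonormalFamily.

Lemma Zp_ball_measurable (p : nat) (a : Zpadic p) n :
  measurable (Zp_ball a n : set (ZpM p)).
Proof. by apply: sub_sigma_algebra; exists a, n. Qed.

Lemma Zp_ball_open (p : nat) (a : Zpadic p) n : Zp_open (Zp_ball a n).
Proof. by move=> x ax; exists n => y xy k kn; rewrite xy // ax. Qed.

Lemma Zp_open_compact_measurable (p : nat) (K : set (Zpadic p)) :
  Zp_open K -> Zp_compact K -> measurable (K : set (ZpM p)).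
Proof.
move=> Kopen Kcompact.
have [n Kn] := choice (fun i : {x | K x} => Kopen _ (proj2_sig i)).
pose V i := Zp_ball (proj1_sig i) (n i).
have [F [finF KF]] : exists F, finite_set F /\ K `<=` \bigcup_(i in F) V i.
  apply: Kcompact => [i|x Kx]; first exact: Zp_ball_open.
  by exists (exist _ x Kx).
suff -> : K = \bigcup_(i in F) V i.
  by apply: fin_bigcup_measurable => // i _; exact: Zp_ball_measurable.
by apply/seteqP; split => // x [i _ /Kn].
Qed.

Section IndicatorFamily.
Variables (R : realType) (p : nat) (mu : {measure set (ZpM p) -> \bar R}).
Variables (J : eqType) (c : J -> R) (K : J -> set (Zpadic p)).
Local Notation e := (e_fun c K).

(* [Rintegral] is [fine] of the integral, so being nonzero forces finiteness. *)
Lemma e_fun_L2 j : measurable (K j : set (ZpM p)) ->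
  Rintegral mu setT (fun x => sqmod (e j x)) != 0 -> L2 mu (e j).
Proof.
move=> mK int_neq0; split; [|split].
- by apply: measurable_funM => //; exact: measurable_indic.
- exact: measurable_cst.
- by move: int_neq0; rewrite /Rintegral; case: (\int[mu]_x _)%E => [r _| |];
    rewrite ?eqxx ?ltry.
Qed.

Lemma e_fun_out j x : ~ K j x -> e j x = 0.
Proof. by move=> Kjx; rewrite /e_fun indicE memNset // mulr0. Qed.

Lemma e_fun_disjoint : trivIset setT K ->
  forall i j x, i != j -> e i x = 0 \/ e j x = 0.
Proof.
move=> Kdisj i j x ij.
have [Kix|/e_fun_out] := pselect (K i x); last by left.
have [Kjx|/e_fun_out] := pselect (K j x); last by right.
by move: ij; rewrite (Kdisj i j) ?eqxx //; exists x.
Qed.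

End IndicatorFamily.

Theorem proposition1 (R : realType) (p : nat) (hp : prime p)
  (mu : {measure set (ZpM p) -> \bar R}) (hmu : is_haar mu)
  (H : operator R p) (U : R -> operator R p) (hU : unitary_group_of mu H U)
  (N : set (ZpM p)) (hN : mu.-negligible N)
  (J : countType) (K : J -> set (Zpadic p))
  (hKopen : forall j, Zp_open (K j)) (hKcompact : forall j, Zp_compact (K j))
  (hKdisj : trivIset setT K) (hKcover : ~` N = \bigcup_j K j)
  (c : J -> R) (hcpos : forall j, 0 < c j)
  (hcnorm : forall j, L2norm mu (e_fun c K j) = 1)
  (H2 : forall t : R, 0 <= t -> forall f,
          closed_span mu (e_fun c K) f -> closed_span mu (e_fun c K) (U t f)) :
  forall (v : J) (t : R), 0 <= t ->
    (\esum_(r in [set: J])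
       (sqmod (L2inner mu (e_fun c K r) (U t (e_fun c K v))))%:E = 1)%E.
Proof.
move=> v t t_ge0; set e := e_fun c K.
have e_unit j : Rintegral mu setT (fun x => sqmod (e j x)) = 1.
  by rewrite -sqr_L2norm hcnorm expr1n.
have e_L2 j : L2 mu (e j).
  apply: e_fun_L2; first exact: Zp_open_compact_measurable.
  by rewrite e_unit oner_neq0.
have [[U_L2 [U_inner _]] _ _] := hU.
have F_L2 : L2 mu (U t (e v)) := U_L2 t _ (e_L2 v).
have F_unit : Rintegral mu setT (fun x => sqmod (U t (e v) x)) = 1.
  by rewrite -Re_L2inner_id U_inner // Re_L2inner_id.
have F_span : closed_span mu e (U t (e v)) := H2 t t_ge0 _ (mem_closed_span (e_L2 v)).
under eq_esum do rewrite sqmod_L2innerC //.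
by rewrite (parseval_closed_span e_L2 e_unit (e_fun_disjoint c hKdisj)) // F_unit.
Qed.
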